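(* Let $\mathcal{S}\subset\mathbb{R}_{\geq 0}$ be a measurable set with positive Lebesgue measure. Let $G$ be a probability distribution on $\mathbb{R}$ and $\pi:\mathbb{R}_{\geq 0}\to[0,1]$ a measurable function, and let $(\mu,|Z|,D)$ be generated by $\mu\sim G$, $|Z|\mid\mu\sim|\mathrm{N}(\mu,1)|$, $D\mid(|Z|,\mu)\sim\mathrm{Bernoulli}(\pi(|Z|))$. Then the conditional distribution of $|Z|$ given $\{|Z|\in\mathcal{S},\,D=1\}$ equals the conditional distribution of $|Z|$ given $\{|Z|\in\mathcal{S}\}$ if and only if there exists a constant $a\in(0,1]$ such that $\pi(z)=a$ for Lebesgue-almost every $z\in\mathcal{S}$.
   Context: $|\mathrm{N}(\mu,1)|$ denotes the folded normal distribution, i.e. the law of $|X|$ for $X\sim\mathrm{N}(\mu,1)$. Here $\mu$ is a latent signal-to-noise ratio, $|Z|$ an absolute z-score and $D$ an indicator that the study is published; $\pi(z)=\mathbb{P}(D=1\mid |Z|=z)$ is the publication probability. *)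

From HB Require Import structures.
From mathcomp Require Import all_boot all_order all_algebra.
From mathcomp Require Import all_classical all_reals all_analysis.
Set Implicit Arguments. Unset Strict Implicit. Unset Printing Implicit Defensive.
Import Order.TTheory GRing.Theory Num.Theory.
Import numFieldNormedType.Exports.
Local Open Scope classical_set_scope.
Local Open Scope ring_scope.

Definition folded_normal_pdf (R : realType) (mu z : R) : R :=
  if 0 <= z then normal_pdf mu 1 z + normal_pdf (- mu) 1 z else 0.

Definition prob_absZ (R : realType) (G : probability R R) (A : set R) : \bar R :=
  (\int[G]_mu (\int[lebesgue_measure]_(z in A) (folded_normal_pdf mu z)%:E))%E.

(* P(|Z| \in A, D = 1) *)
Definition prob_absZ_pub (R : realType) (G : probability R R) (pi : R -> R)
  (A : set R) : \bar R :=
  (\int[G]_mu (\int[lebesgue_measure]_(z in A)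
      (folded_normal_pdf mu z * pi z)%:E))%E.

(* The conditional distribution of |Z| given {|Z| \in S, D = 1} equals the
   conditional distribution of |Z| given {|Z| \in S}; the former is only
   defined when P(|Z| \in S, D = 1) > 0, which is required. *)
Definition cond_dists_equal (R : realType) (G : probability R R) (pi : R -> R)
  (S : set R) : Prop :=
  (0 < prob_absZ_pub G pi S)%E /\
  forall B : set R, measurable B ->
    fine (prob_absZ_pub G pi (B `&` S)) / fine (prob_absZ_pub G pi S)
    = fine (prob_absZ G (B `&` S)) / fine (prob_absZ G S).

From HB Require Import structures.
From mathcomp Require Import all_boot all_order all_algebra.
From mathcomp Require Import all_classical all_reals all_analysis.
From mathcomp Require Import measurable_realfun.
Import Order.TTheory GRing.Theory Num.Theory.
Import numFieldNormedType.Exports.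
Local Open Scope classical_set_scope.
Local Open Scope ring_scope.

(* Write P_h(A) = \int G(dmu) \int_A k(mu, z) h(z) dz  (prob_absZ_pub G h A),
   where k is the folded normal density, so that P(|Z| \in A) = P_1(A) and
   P(|Z| \in A, D = 1) = P_pi(A).  Equality of the two conditional laws of |Z|
   given S says that P_pi(A) = a P_1(A) = P_a(A) for all measurable A included
   in S, with a = P_pi(S) / P_1(S) in (0, 1].  As k(mu, z) > 0 for all z >= 0,
   h |-> P_h(A) is strictly monotone on sets A of positive Lebesgue measure;
   applied to S /\ {pi > a} and S /\ {pi < a} this forces pi = a almost
   everywhere on S.  Conversely, pi = a almost everywhere on S gives P_pi = P_a
   on subsets of S. *)

Lemma integral_gt0 d (T : measurableType d) (R : realType) (mu : measure T R)
    (D : set T) (f : T -> \bar R) :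
  measurable D -> measurable_fun D f ->
  (forall x, D x -> (0 < f x)%E) -> (0 < mu D)%E ->
  (0 < \int[mu]_(x in D) f x)%E.
Proof.
move=> mD mf f_gt0 muD_gt0.
have f_ge0 x : D x -> (0 <= f x)%E by move/f_gt0/ltW.
rewrite lt0e integral_ge0 // andbT; apply/negP => /eqP int0.
have [N [mN muN0 fN]] : ae_eq mu D f (cst 0).
  apply/(ae_eq_integral_abs mu mD mf).
  by rewrite -int0; apply: eq_integral => x /[!inE] /f_ge0/gee0_abs.
have : (mu D <= mu N)%E.
  apply: le_measure; rewrite ?inE // => x Dx; apply: fN => /(_ Dx) fx0.
  by move: (f_gt0 x Dx); rewrite fx0 ltxx.
by rewrite muN0 leNgt muD_gt0.
Qed.

Section folded_normal_mixture.
Context {R : realType}.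
Implicit Types (A : set R) (f g h : R -> R) (m z : R).

Lemma measurable_nonneg : measurable [set z : R | 0 <= z].
Proof. by rewrite -set_itvcy; exact: measurable_itv. Qed.

Lemma folded_normal_pdf_ge0 m z : 0 <= folded_normal_pdf m z.
Proof.
rewrite /folded_normal_pdf; case: ifP => // _.
by rewrite addr_ge0 ?normal_pdf_ge0.
Qed.

Lemma folded_normal_pdf_gt0 m z : 0 <= z -> 0 < folded_normal_pdf m z.
Proof.
move=> z0; rewrite /folded_normal_pdf z0 ltr_wpDr ?normal_pdf_ge0 //.
by rewrite /normal_pdf oner_eq0 mulr_gt0 ?expR_gt0 ?normal_peak_gt0.
Qed.

Lemma measurable_folded_normal_pdf :
  measurable_fun setT (fun p : R * R => folded_normal_pdf p.1 p.2).
Proof.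
have mpdf (s : R * R -> R) : measurable_fun setT s ->
    measurable_fun setT (fun p => normal_pdf (s p) 1 p.2).
  move=> ms; rewrite /normal_pdf oner_eq0; apply: measurable_funM => //.
  apply: measurableT_comp => //; apply: measurable_funM => //.
  by apply/measurable_funN/measurable_funX/measurable_funB.
apply: measurable_fun_ifT.
- by apply: measurable_fun_ler => //; exact: measurable_snd.
- by apply: measurable_funD; apply: mpdf => //; exact: measurable_funN.
- exact: measurable_cst.
Qed.

Lemma measurable_folded_normal_pdf1 m :
  measurable_fun setT (folded_normal_pdf m).
Proof. exact: (measurable_fun_pair2 m measurable_folded_normal_pdf). Qed.

Lemma measurable_folded_normal_pdfM h A m : measurable_fun A h ->
  measurable_fun A (fun z => (folded_normal_pdf m z * h z)%:E).
Proof.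
move=> mh; apply/measurable_EFinP/measurable_funM => //.
exact: measurable_funTS (measurable_folded_normal_pdf1 m).
Qed.

Definition folded_mass h A m : \bar R :=
  \int[lebesgue_measure]_(z in A) (folded_normal_pdf m z * h z)%:E.

Lemma folded_mass_ge0 h A m :
  (forall z, A z -> 0 <= h z) -> (0 <= folded_mass h A m)%E.
Proof.
move=> h_ge0; apply: integral_ge0 => z /h_ge0 hz.
by rewrite lee_fin mulr_ge0 ?folded_normal_pdf_ge0.
Qed.

Lemma measurable_folded_mass h A : measurable A -> measurable_fun A h ->
  (forall z, A z -> 0 <= h z) -> measurable_fun setT (folded_mass h A).
Proof.
move=> mA mh h_ge0.
have mhA : measurable_fun setT (h \_ A).
  by apply/(measurable_restrictT _ mA).
pose F (p : R * R) := (folded_normal_pdf p.1 p.2 * (h \_ A) p.2)%:E.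
have -> : folded_mass h A = fubini_F lebesgue_measure F.
  apply/funext => m; rewrite /folded_mass integral_mkcond.
  by apply: eq_integral => z _; rewrite /F !patchE; case: ifP; rewrite ?mulr0.
apply: measurable_fun_fubini_tonelli_F.
  apply/measurable_EFinP/measurable_funM.
    exact: measurable_folded_normal_pdf.
  exact: measurableT_comp mhA measurable_snd.
move=> p; rewrite /F lee_fin mulr_ge0 ?folded_normal_pdf_ge0 // patchE.
by case: ifPn => // /set_mem /h_ge0.
Qed.

Lemma folded_mass_le2 h A m : measurable A -> measurable_fun A h ->
  (forall z, A z -> 0 <= h z <= 1) -> (folded_mass h A m <= 2%:E)%E.
Proof.
move=> mA mh h01.
pose g z := normal_pdf m 1 z + normal_pdf (- m) 1 z.
have g_ge0 z : 0 <= g z by rewrite addr_ge0 ?normal_pdf_ge0.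
have int_g : (\int[lebesgue_measure]_z (g z)%:E = 2%:E)%E.
  under eq_integral do rewrite EFinD.
  rewrite ge0_integralD ?integral_normal_pdf //;
    by [move=> z _; rewrite lee_fin normal_pdf_ge0 |
        apply/measurable_EFinP; exact: measurable_normal_pdf].
rewrite -int_g.
apply: (@le_trans _ _ (\int[lebesgue_measure]_(z in A) (g z)%:E)%E).
  apply: ge0_le_integral => //.
  - move=> z /h01 /andP[h0 _].
    by rewrite lee_fin mulr_ge0 ?folded_normal_pdf_ge0.
  - exact: measurable_folded_normal_pdfM.
  - by apply/measurable_EFinP/measurable_funTS/measurable_funD;
      exact: measurable_normal_pdf.
  - move=> z /h01 /andP[h0 h1]; rewrite lee_fin.
    apply: (@le_trans _ _ (folded_normal_pdf m z)).
      by rewrite ler_piMr ?folded_normal_pdf_ge0.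
    by rewrite /folded_normal_pdf; case: ifP => // _; exact: g_ge0.
apply: ge0_subset_integral => //.
- by apply/measurable_EFinP/measurable_funD; exact: measurable_normal_pdf.
- by move=> z _; rewrite lee_fin.
Qed.

Lemma folded_mass_gt0 h A m : measurable A -> A `<=` [set z | 0 <= z] ->
  (0 < lebesgue_measure A)%E -> measurable_fun A h ->
  (forall z, A z -> 0 < h z) -> (0 < folded_mass h A m)%E.
Proof.
move=> mA A_ge0 lebA mh h_gt0; apply: integral_gt0 => //.
- exact: measurable_folded_normal_pdfM.
- by move=> z Az; rewrite lte_fin mulr_gt0 ?h_gt0 ?folded_normal_pdf_gt0 ?A_ge0.
Qed.

Lemma folded_massD f g A m : measurable A -> measurable_fun A f ->
  measurable_fun A g -> (forall z, A z -> 0 <= f z) ->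
  (forall z, A z -> 0 <= g z) ->
  folded_mass (f \+ g) A m = (folded_mass f A m + folded_mass g A m)%E.
Proof.
move=> mA mf mg f_ge0 g_ge0; rewrite /folded_mass -ge0_integralD //.
- by apply: eq_integral => z _; rewrite /= mulrDr EFinD.
- by move=> z /f_ge0 fz; rewrite lee_fin mulr_ge0 ?folded_normal_pdf_ge0.
- exact: measurable_folded_normal_pdfM.
- by move=> z /g_ge0 gz; rewrite lee_fin mulr_ge0 ?folded_normal_pdf_ge0.
- exact: measurable_folded_normal_pdfM.
Qed.

Lemma folded_mass_cst k A m : measurable A -> 0 <= k ->
  folded_mass (cst k) A m = (k%:E * folded_mass (cst 1%R) A m)%E.
Proof.
move=> mA k_ge0; rewrite /folded_mass -ge0_integralZl //.
- by apply: eq_integral => z _; rewrite /= mulr1 EFinM muleC.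
- exact: measurable_folded_normal_pdfM.
- by move=> z _; rewrite lee_fin mulr1 folded_normal_pdf_ge0.
Qed.

Variable G : probability R R.

Lemma prob_absZE A : prob_absZ G A = prob_absZ_pub G (cst 1) A.
Proof.
by apply: eq_integral => m _; apply: eq_integral => z _; rewrite mulr1.
Qed.

Lemma prob_absZ_pub_fin_num h A : measurable A -> measurable_fun A h ->
  (forall z, A z -> 0 <= h z <= 1) -> prob_absZ_pub G h A \is a fin_num.
Proof.
move=> mA mh h01; have h_ge0 z : A z -> 0 <= h z by move=> /h01 /andP[].
rewrite ge0_fin_numE; last first.
  by apply: integral_ge0 => m _; exact: folded_mass_ge0.
apply: (@le_lt_trans _ _ (\int[G]_(m in setT) (cst 2%:E) m)%E); last first.
  rewrite integral_cst // (@le_lt_trans _ _ 2%:E) ?ltry //.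
  by rewrite -[leRHS]mule1 lee_wpmul2l // probability_le1.
apply: ge0_le_integral => //.
- by move=> m _; exact: folded_mass_ge0.
- exact: measurable_folded_mass.
- by move=> m _; exact: folded_mass_le2.
Qed.

Lemma prob_absZ_pub_gt0 h A : measurable A -> A `<=` [set z | 0 <= z] ->
  (0 < lebesgue_measure A)%E -> measurable_fun A h ->
  (forall z, A z -> 0 < h z) -> (0 < prob_absZ_pub G h A)%E.
Proof.
move=> mA A_ge0 lebA mh h_gt0; apply: integral_gt0 => //.
- by apply: measurable_folded_mass => // z /h_gt0/ltW.
- by move=> m _; exact: folded_mass_gt0.
- by move: (@lte01 R); rewrite -(probability_setT G).
Qed.

Lemma prob_absZ_pubD f g A : measurable A -> measurable_fun A f ->
  measurable_fun A g -> (forall z, A z -> 0 <= f z) ->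
  (forall z, A z -> 0 <= g z) ->
  prob_absZ_pub G (f \+ g) A = (prob_absZ_pub G f A + prob_absZ_pub G g A)%E.
Proof.
move=> mA mf mg f_ge0 g_ge0; rewrite -ge0_integralD //.
- by apply: eq_integral => m _; exact: folded_massD.
- by move=> m _; exact: folded_mass_ge0.
- exact: measurable_folded_mass.
- by move=> m _; exact: folded_mass_ge0.
- exact: measurable_folded_mass.
Qed.

Lemma prob_absZ_pub_cst k A : measurable A -> 0 <= k ->
  prob_absZ_pub G (cst k) A = (k%:E * prob_absZ G A)%E.
Proof.
move=> mA k_ge0; rewrite prob_absZE -ge0_integralZl //.
- by apply: eq_integral => m _; exact: folded_mass_cst.
- exact: measurable_folded_mass.
- by move=> m _; exact: folded_mass_ge0.
Qed.

Lemma prob_absZ_fin_num A : measurable A -> prob_absZ G A \is a fin_num.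
Proof.
move=> mA; rewrite prob_absZE.
by apply: prob_absZ_pub_fin_num => // z _; rewrite ler01 lexx.
Qed.

Lemma prob_absZ_gt0 A : measurable A -> A `<=` [set z | 0 <= z] ->
  (0 < lebesgue_measure A)%E -> (0 < prob_absZ G A)%E.
Proof.
by move=> mA A_ge0 lebA; rewrite prob_absZE; exact: prob_absZ_pub_gt0.
Qed.

Lemma prob_absZ_pub_le h A : measurable A -> measurable_fun A h ->
  (forall z, A z -> 0 <= h z <= 1) ->
  (prob_absZ_pub G h A <= prob_absZ G A)%E.
Proof.
move=> mA mh h01.
have h_ge0 z : A z -> 0 <= h z by move=> /h01 /andP[].
have h'_ge0 z : A z -> 0 <= 1 - h z by move=> /h01 /andP[_]; rewrite subr_ge0.
rewrite prob_absZE (_ : cst 1 = h \+ (cst 1 \- h)); last first.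
  by apply/funext => z /=; rewrite addrC subrK.
rewrite prob_absZ_pubD //; last exact: measurable_funB.
by rewrite leeDl //; apply: integral_ge0 => m _; exact: folded_mass_ge0.
Qed.

Lemma prob_absZ_pub_lt f g A : measurable A -> A `<=` [set z | 0 <= z] ->
  (0 < lebesgue_measure A)%E -> measurable_fun A f -> measurable_fun A g ->
  (forall z, A z -> 0 <= f z <= 1) -> (forall z, A z -> f z < g z) ->
  (prob_absZ_pub G f A < prob_absZ_pub G g A)%E.
Proof.
move=> mA A_ge0 lebA mf mg f01 fg.
have f_ge0 z : A z -> 0 <= f z by move=> /f01 /andP[].
have mgf : measurable_fun A (g \- f) by exact: measurable_funB.
rewrite (_ : g = f \+ (g \- f)); last first.
  by apply/funext => z /=; rewrite addrC subrK.
rewrite prob_absZ_pubD //; last by move=> z /fg; rewrite subr_ge0 => /ltW.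
rewrite lteDl; last exact: prob_absZ_pub_fin_num.
by apply: prob_absZ_pub_gt0 => // z /fg; rewrite subr_gt0.
Qed.

Lemma prob_absZ_pub_eq_null f g A : measurable A ->
  A `<=` [set z | 0 <= z] -> measurable_fun A f -> measurable_fun A g ->
  (forall z, A z -> 0 <= f z <= 1) -> (forall z, A z -> f z < g z) ->
  prob_absZ_pub G f A = prob_absZ_pub G g A -> lebesgue_measure A = 0%E.
Proof.
move=> mA A_ge0 mf mg f01 fg fgE; apply/eqP.
rewrite eq_le measure_ge0 andbT leNgt; apply/negP => lebA.
have := prob_absZ_pub_lt f g A mA A_ge0 lebA mf mg f01 fg.
by rewrite fgE ltxx.
Qed.

Section conditioning_set.
(* The space in [{ pi] avoids the [{pi _}] notation of generic_quotient. *)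
Context {S : set R} { pi : R -> R }.
Hypotheses (mS : measurable S) (S_ge0 : S `<=` [set z | 0 <= z]).
Hypotheses (mpi : measurable_fun S pi)
  (pi01 : forall z, S z -> 0 <= pi z <= 1).

Lemma prob_absZ_pub_proportionalP a : 0 <= a <= 1 ->
  (forall A, measurable A -> A `<=` S ->
     prob_absZ_pub G pi A = (a%:E * prob_absZ G A)%E) <->
  {ae lebesgue_measure, forall z, S z -> pi z = a}.
Proof.
move=> /andP[a_ge0 a_le1]; split => [prop | pi_ae A mA AS].
- pose Sgt := S `&` pi @^-1` `]a, +oo[.
  pose Slt := S `&` pi @^-1` `]-oo, a[.
  have mSgt : measurable Sgt by exact: mpi mS _ (measurable_itv _).
  have mSlt : measurable Slt by exact: mpi mS _ (measurable_itv _).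
  have SgtS : Sgt `<=` S by move=> z [].
  have SltS : Slt `<=` S by move=> z [].
  have cstE (B : set R) : measurable B -> B `<=` S ->
      prob_absZ_pub G (cst a) B = prob_absZ_pub G pi B.
    by move=> mB BS; rewrite prop // prob_absZ_pub_cst.
  have lebSgt : lebesgue_measure Sgt = 0%E.
    apply: (prob_absZ_pub_eq_null (cst a) pi _ mSgt).
    - exact: subset_trans SgtS S_ge0.
    - exact: measurable_cst.
    - exact: measurable_funS mS SgtS mpi.
    - by move=> z _; rewrite a_ge0 a_le1.
    - by move=> z [_ /=]; rewrite in_itv /= andbT.
    - exact: cstE mSgt SgtS.
  have lebSlt : lebesgue_measure Slt = 0%E.
    apply: (prob_absZ_pub_eq_null pi (cst a) _ mSlt).
    - exact: subset_trans SltS S_ge0.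
    - exact: measurable_funS mS SltS mpi.
    - exact: measurable_cst.
    - by move=> z [/pi01].
    - by move=> z [_ /=]; rewrite in_itv.
    - exact/esym/cstE.
  exists (Sgt `|` Slt); split=> [||z /= /not_implyP[Sz /eqP]].
  + exact: measurableU.
  + by rewrite measureU0.
  + rewrite neq_lt => /orP[piz|piz].
      by right; split => //=; rewrite in_itv.
    by left; split => //=; rewrite in_itv /= piz.
- rewrite -(prob_absZ_pub_cst _ _ mA a_ge0); apply: eq_integral => m _.
  apply: ae_eq_integral => //.
  + exact: measurable_folded_normal_pdfM (measurable_funS mS AS mpi).
  + exact: measurable_folded_normal_pdfM (measurable_cst _).
  + apply: filterS pi_ae.
      exact: (ae_filter_ringOfSetsType lebesgue_measure).
    by move=> z piz Az; rewrite piz //; exact: AS.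
Qed.

Hypothesis lebS : (0 < lebesgue_measure S)%E.

Lemma cond_dists_equalE : cond_dists_equal G pi S <->
  exists a, 0 < a <= 1 /\ forall A, measurable A -> A `<=` S ->
    prob_absZ_pub G pi A = (a%:E * prob_absZ G A)%E.
Proof.
have PS_fin := prob_absZ_fin_num _ mS.
have PS_gt0 := prob_absZ_gt0 _ mS S_ge0 lebS.
have PpubA_fin A : measurable A -> A `<=` S ->
    prob_absZ_pub G pi A \is a fin_num.
  move=> mA AS; apply: prob_absZ_pub_fin_num => //; last by move=> z /AS /pi01.
  exact: measurable_funS mS AS mpi.
split => [[PpubS_gt0 ratioE] | [a [/andP[a_gt0 a_le1] prop]]].
- have PpubS_fin := PpubA_fin S mS (@subset_refl _ S).
  have [p PpubSE] : exists p, prob_absZ_pub G pi S = p%:E.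
    by exists (fine (prob_absZ_pub G pi S)); rewrite (fineK PpubS_fin).
  have [q PSE] : exists q, prob_absZ G S = q%:E.
    by exists (fine (prob_absZ G S)); rewrite (fineK PS_fin).
  have p_gt0 : 0 < p by move: PpubS_gt0; rewrite PpubSE lte_fin.
  have q_gt0 : 0 < q by move: PS_gt0; rewrite PSE lte_fin.
  have p_le_q : p <= q.
    by rewrite -lee_fin -PpubSE -PSE; apply: prob_absZ_pub_le.
  exists (p / q); split; first by rewrite divr_gt0 // ler_pdivrMr // mul1r.
  move=> A mA AS; have := ratioE A mA.
  rewrite (setIidl AS) PpubSE PSE [fine p%:E]/= [fine q%:E]/= => ratioA.
  rewrite -(fineK (PpubA_fin A mA AS)) -(fineK (prob_absZ_fin_num _ mA)).
  rewrite -EFinM; congr EFin.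
  rewrite -[LHS](divfK (lt0r_neq0 p_gt0)) ratioA.
  by rewrite [LHS]mulrC mulrA [RHS]mulrAC.
- have PpubSE := prop S mS (@subset_refl _ S).
  split; first by rewrite PpubSE mule_gt0 ?lte_fin.
  move=> B mB; have mBS := measurableI _ _ mB mS.
  rewrite (prop _ mBS (@subIsetr _ B S)) PpubSE.
  move: (prob_absZ_fin_num _ mBS) PS_fin PS_gt0.
  move: (prob_absZ G (B `&` S)) (prob_absZ G S) => x y /fineK <- /fineK <-.
  rewrite lte_fin -!EFinM /= => y_gt0.
  by rewrite -mulf_div divff ?mul1r // gt_eqF.
Qed.

End conditioning_set.

End folded_normal_mixture.

Theorem proposition1 (R : realType) (S : set R) (G : probability R R)
  (pi : R -> R) :
  measurable S -> S `<=` [set x : R | 0 <= x] ->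
  (0 < lebesgue_measure S)%E ->
  measurable_fun [set x : R | 0 <= x] pi ->
  (forall z, 0 <= z -> 0 <= pi z <= 1) ->
  cond_dists_equal G pi S <->
  exists a : R, 0 < a <= 1 /\
    {ae lebesgue_measure, forall z, S z -> pi z = a}.
Proof.
move=> mS S_ge0 lebS mpi pi01.
have mpiS : measurable_fun S pi.
  exact: measurable_funS measurable_nonneg S_ge0 mpi.
have pi01S z : S z -> 0 <= pi z <= 1 by move/S_ge0; exact: pi01.
apply: (iff_trans (cond_dists_equalE G mS S_ge0 mpiS pi01S lebS)).
split=> -[a [a01 H]]; exists a; split=> //;
  have a01' : 0 <= a <= 1 by case/andP: a01 => /ltW -> ->.
all: exact/(prob_absZ_pub_proportionalP G mS S_ge0 mpiS pi01S _ a01').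
Qed.
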